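(* Let $G$ be a complete edge-colored graph such that for each strong module $M$ of $G$ the quotient graph $G[M]/\mathbb{P}_{\max}(M)$ is a complete edge-colored permutation graph. Then $G$ is a complete edge-colored permutation graph.
   Context: A complete $k$-edge-colored graph $G=(V,E_1,\dots,E_k)$ is the complete graph on a finite set $V$ with edges partitioned into $k$ nonempty color classes $E_i$ (the one-vertex graph also counts); $G_{|i}=(V,E_i)$. A labeling is a bijection $\ell:V\to\{1,\dots,|V|\}$. A graph $(V,E)$ with labeling $\ell$ is a simple permutation graph of a permutation $\pi$ if for all $u,v$ with $\ell(u)>\ell(v)$: $\{u,v\}\in E$ iff $\pi^{-1}(\ell(u))<\pi^{-1}(\ell(v))$. $G$ is a complete edge-colored permutation graph if there exist a labeling $\ell$ and permutations $\pi_1,\dots,\pi_k$ with $(G_{|i},\ell)$ a simple permutation graph of $\pi_i$ for all $i$. A module is a set $M\subseteq V$ such that for every $v\notin M$ all edges $\{u,v\}$, $u\in M$, have the same color; a strong module is a nonempty module comparable by inclusion or disjoint with every other module. For a strong module $M$ with $|M|\ge2$, $\mathbb{P}_{\max}(M)$ is the set of inclusion-maximal strong modules properly contained in $M$, and $G[M]/\mathbb{P}_{\max}(M)$ is the complete graph on $\mathbb{P}_{\max}(M)$ with $\{M_a,M_b\}$ colored by the common color of all edges between $M_a$ and $M_b$; for $|M|=1$ it is the one-vertex graph. *)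

From mathcomp Require Import all_boot all_fingroup.
Set Implicit Arguments. Unset Strict Implicit. Unset Printing Implicit Defensive.

(* A complete k-edge-colored graph on a finite vertex type V is given by a
   colouring c : V -> V -> 'I_k of the (unordered) pairs; c u u is irrelevant.
   Edge {u,v} (u != v) lies in E_i iff c u v = i. *)

Section Defs.
Variables (V : finType) (k : nat).

Definition complete_colored_graph (c : V -> V -> 'I_k) : Prop :=
  (forall u v, c u v = c v u) /\
  (#|V| = 1 \/ forall i : 'I_k, exists u v, u != v /\ c u v = i).

Definition color_class (c : V -> V -> 'I_k) (i : 'I_k) : rel V :=
  fun u v => (u != v) && (c u v == i).

Definition is_module (c : V -> V -> 'I_k) (M : {set V}) : bool :=
  [forall v, (v \notin M) ==> [forall u in M, forall u' in M, c u v == c u' v]].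

Definition strong_module (c : V -> V -> 'I_k) (M : {set V}) : bool :=
  [&& M != set0, is_module c M &
      [forall M' : {set V}, is_module c M' ==>
         [|| M \subset M', M' \subset M | [disjoint M & M']]]].

Definition Pmax (c : V -> V -> 'I_k) (M : {set V}) : {set {set V}} :=
  [set P : {set V} | [&& strong_module c P, P \proper M &
     [forall Q : {set V}, (strong_module c Q && (Q \proper M)) ==> ~~ (P \proper Q)]]].

Definition qvert (c : V -> V -> 'I_k) (M : {set V}) : finType :=
  {P : {set V} | P \in Pmax c M}.

(* colour classes of G[M]/P_max(M): {Ma, Mb} (Ma != Mb) has colour i iff the
   (common) colour of the edges between Ma and Mb is i *)
Definition qclass (c : V -> V -> 'I_k) (M : {set V}) (i : 'I_k) : rel (qvert c M) :=
  fun P Q => (P != Q) && [exists x in val P, exists y in val Q, c x y == i].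

End Defs.
Arguments qclass {V k} c M i _ _.

Section PermGraph.
Variables (T : finType) (k : nat).

(* (T, E) with labeling l (0-indexed: l : T -> 'I_#|T|) is a simple
   permutation graph of pi. *)
Definition simple_perm_graph (E : rel T) (l : T -> 'I_#|T|) (pi : {perm 'I_#|T|}) : Prop :=
  forall u v, l v < l u -> (E u v <-> (pi^-1)%g (l u) < (pi^-1)%g (l v)).

Definition colored_perm_graph (E : 'I_k -> rel T) : Prop :=
  exists l : T -> 'I_#|T|, bijective l /\
  exists pis : 'I_k -> {perm 'I_#|T|},
    forall i, simple_perm_graph (E i) l (pis i).

End PermGraph.

From mathcomp Require Import all_boot all_fingroup.
From mathcomp Require Import zify.
Set Implicit Arguments. Unset Strict Implicit. Unset Printing Implicit Defensive.

(* Realizing a coloured permutation graph amounts to choosing a linear order f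
   on the vertices (the labeling) and, for every colour i, a linear order g_i
   (the positions in pi_i) such that an edge uv with f v < f u has colour i
   exactly when g_i u < g_i v.  Such orders are built bottom-up along the
   modular decomposition.  The maximal strong submodules of a strong module M
   are disjoint modules covering M, so the colour of an edge between two of them
   is the colour of the corresponding edge of the quotient; ordering the
   vertices of M lexicographically, first by the quotient order of their block
   and then by the order inside the block, realizes M.  Ranking the orders
   obtained for the whole vertex set gives the labeling and the permutations. *)

Section Rank.
Variables (T : finType) (h : T -> nat).

Definition rank (x : T) : nat := #|[set y | h y < h x]|.

Lemma rank_lt_card x : rank x < #|T|.
Proof.
rewrite /rank -cardsT; apply/proper_card/properP; split; first exact: subsetT.
by exists x; rewrite ?inE ?ltnn.
Qed.

Lemma ltn_rank x y : (rank x < rank y) = (h x < h y).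
Proof.
rewrite /rank; case: (ltnP (h x) (h y)) => hxy.
  apply/proper_card/properP; split; last by exists x; rewrite !inE ?ltnn.
  by apply/subsetP => z; rewrite !inE => /ltn_trans; apply.
apply/negbTE; rewrite -leqNgt; apply/subset_leq_card/subsetP => z.
by rewrite !inE => /leq_trans; apply.
Qed.

Lemma rank_inj x y : rank x = rank y -> h x = h y.
Proof.
by move=> e; case: (ltngtP (h x) (h y)) => // lt; move: lt; rewrite -ltn_rank e ltnn.
Qed.

End Rank.

Lemma ltn_lex n a b r s : r < n -> s < n ->
  (a * n + r < b * n + s) = (a < b) || (a == b) && (r < s).
Proof.
move=> rn sn; case: (ltngtP a b) => [ab|ba|->] /=; last by rewrite ltn_add2l.
- have: a.+1 * n <= b * n by rewrite leq_mul2r ab orbT.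
  rewrite mulSn; lia.
- have: b.+1 * n <= a * n by rewrite leq_mul2r ba orbT.
  rewrite mulSn; lia.
Qed.

Lemma lex_inj n a b r s : r < n -> s < n -> a * n + r = b * n + s -> a = b /\ r = s.
Proof.
move=> rn sn e; have n_gt0 : 0 < n by apply: leq_ltn_trans rn.
split; first by have := congr1 (divn^~ n) e; rewrite /= !divnMDl // !divn_small ?addn0.
by have := congr1 (modn^~ n) e; rewrite /= !modnMDl !modn_small.
Qed.

Section Modules.
Variables (V : finType) (k : nat) (c : V -> V -> 'I_k).

Lemma strong_module_set1 x : strong_module c [set x].
Proof.
apply/and3P; split; first by apply/set0Pn; exists x; rewrite inE.
  apply/forallP => v; apply/implyP => _.
  by apply/forall_inP => u /set1P ->; apply/forall_inP => u' /set1P ->.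
apply/forallP => Q; apply/implyP => _.
by case: (boolP (x \in Q)) => xQ; rewrite ?sub1set ?xQ // disjoints1 xQ !orbT.
Qed.

Lemma strong_module_setT : 0 < #|V| -> strong_module c [set: V].
Proof.
move=> V_gt0; apply/and3P; split; first by rewrite -card_gt0 cardsT.
  by apply/forallP => v; rewrite in_setT.
by apply/forallP => Q; apply/implyP => _; rewrite subsetT orbT.
Qed.

Lemma strong_module_comparable (P Q : {set V}) : strong_module c P -> is_module c Q ->
  [|| P \subset Q, Q \subset P | [disjoint P & Q]].
Proof. by case/and3P => _ _ /forallP /(_ Q) /implyP. Qed.

Lemma PmaxP (M P : {set V}) : P \in Pmax c M ->
  [/\ strong_module c P, P \proper M &
      forall Q, strong_module c Q -> Q \proper M -> ~~ (P \proper Q)].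
Proof.
rewrite inE => /and3P [sP pP /forallP maxP]; split => // Q sQ pQ.
by move: (maxP Q); rewrite sQ pQ.
Qed.

Lemma Pmax_disjoint (M P Q : {set V}) : P \in Pmax c M -> Q \in Pmax c M -> P != Q ->
  [disjoint P & Q].
Proof.
move=> /PmaxP [sP pP maxP] /PmaxP [sQ pQ maxQ] neqPQ.
case/and3P: (sQ) => _ mQ _.
case/or3P: (strong_module_comparable sP mQ) => // sub.
  by move: (maxP Q sQ pQ); rewrite properEneq neqPQ sub.
by move: (maxQ P sP pP); rewrite properEneq eq_sym neqPQ sub.
Qed.

Lemma Pmax_cover (M : {set V}) x : 1 < #|M| -> x \in M -> exists2 P, P \in Pmax c M & x \in P.
Proof.
move=> M_gt1 xM.
pose S Q := [&& strong_module c Q, Q \proper M & x \in Q].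
have Sx : S [set x].
  by rewrite /S strong_module_set1 properEcard sub1set xM cards1 M_gt1 set11.
case: (arg_maxnP (fun Q : {set V} => #|Q|) Sx) => P /and3P [sP pP xP] maxP.
exists P => //; rewrite inE sP pP; apply/forallP => Q; apply/implyP => /andP [sQ pQ].
apply/negP => PQ; have xQ : x \in Q by apply: (subsetP (proper_sub PQ)).
have := maxP Q; rewrite /S sQ pQ xQ => /(_ isT).
by move=> /leq_ltn_trans /(_ (proper_card PQ)); rewrite ltnn.
Qed.

Hypothesis c_sym : forall u v, c u v = c v u.

Lemma module_color_const (P Q : {set V}) x x' y y' :
  is_module c P -> is_module c Q -> [disjoint P & Q] ->
  x \in P -> x' \in P -> y \in Q -> y' \in Q -> c x y = c x' y'.
Proof.
move=> /forallP mP /forallP mQ dPQ xP x'P yQ y'Q.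
move: (mP y); rewrite (disjointFl dPQ yQ).
move=> /forall_inP /(_ x xP) /forall_inP /(_ x' x'P) /eqP ->.
move: (mQ x'); rewrite (disjointFr dPQ x'P).
move=> /forall_inP /(_ y yQ) /forall_inP /(_ y' y'Q) /eqP.
by rewrite c_sym [c x' y']c_sym.
Qed.

End Modules.

Section Quotient.
Variables (V : finType) (k : nat) (c : V -> V -> 'I_k) (M : {set V}).

Definition qblock (x : V) : option (qvert c M) := [pick q : qvert c M | x \in val q].

Lemma qblockE (q : qvert c M) x : x \in val q -> qblock x = Some q.
Proof.
move=> xq; rewrite /qblock; case: pickP => [q' xq' | /(_ q)]; last by rewrite xq.
case: (eqVneq (val q') (val q)) => [/val_inj -> // | neq].
by rewrite (disjointFr (Pmax_disjoint (valP q') (valP q) neq) xq') in xq.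
Qed.

Definition qlift (a : qvert c M -> nat) (x : V) : nat :=
  if qblock x is Some q then a q else 0.

Lemma qliftE (q : qvert c M) x a : x \in val q -> qlift a x = a q.
Proof. by rewrite /qlift => /qblockE ->. Qed.

Lemma qvert_cover x : 1 < #|M| -> x \in M -> exists q : qvert c M, x \in val q.
Proof. by move=> M_gt1 /(Pmax_cover c M_gt1) [P PM xP]; exists (Sub P PM). Qed.

Hypothesis c_sym : forall u v, c u v = c v u.

Lemma qclass_color i (q q' : qvert c M) u v : q != q' -> u \in val q -> v \in val q' ->
  qclass c M i q q' = (c u v == i).
Proof.
move=> neq uq vq'; rewrite /qclass neq /=.
have dj : [disjoint val q & val q'] by apply: Pmax_disjoint (valP q) (valP q') _.
have [/and3P [_ mq _] _ _] := PmaxP (valP q).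
have [/and3P [_ mq' _] _ _] := PmaxP (valP q').
apply/idP/idP => [/exists_inP [x xq /exists_inP [y yq' /eqP <-]] | /eqP cuv].
  by rewrite (module_color_const c_sym mq mq' dj uq xq vq' yq').
by apply/exists_inP; exists u => //; apply/exists_inP; exists v; rewrite ?cuv.
Qed.

End Quotient.

Section Realization.
Variables (V : finType) (k : nat) (c : V -> V -> 'I_k).

(* f stands for the labeling and g i for pi_i^-1 \o f, both only up to
   order-preserving relabelling. *)
Definition perm_realization (M : {set V}) (f : V -> nat) (g : 'I_k -> V -> nat) : Prop :=
  [/\ {in M &, injective f}, forall i, {in M &, injective (g i)} &
      forall i, {in M &, forall u v, f v < f u -> (c u v == i) = (g i u < g i v)}].

Lemma realization_le1 (M : {set V}) :
  #|M| <= 1 -> perm_realization M (fun=> 0) (fun _ _ => 0).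
Proof. by move=> /card_le1_eqP M1; split=> [u v uM vM _ | i u v uM vM _ | //]; apply: M1. Qed.

Lemma realization_lex (M : {set V}) (F : V -> nat) (G : 'I_k -> V -> nat) f g n :
  (forall x, f x < n) -> (forall i x, g i x < n) ->
  (forall i, {in M &, forall u v, (G i u == G i v) = (F u == F v)}) ->
  (forall i, {in M &, forall u v, F v < F u -> (c u v == i) = (G i u < G i v)}) ->
  {in M &, forall u v, F u = F v -> f u = f v -> u = v} ->
  (forall i, {in M &, forall u v, F u = F v -> g i u = g i v -> u = v}) ->
  (forall i, {in M &, forall u v, F u = F v -> f v < f u -> (c u v == i) = (g i u < g i v)}) ->
  perm_realization M (fun x => F x * n + f x) (fun i x => G i x * n + g i x).
Proof.
move=> f_lt g_lt GF coarse f_inj g_inj fine; split.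
- by move=> u v uM vM /(lex_inj (f_lt u) (f_lt v)) [eF ef]; apply: f_inj.
- move=> i u v uM vM /(lex_inj (g_lt i u) (g_lt i v)) [eG eg].
  by apply: (g_inj i) => //; apply/eqP; rewrite -(GF i) // eG.
move=> i u v uM vM; rewrite !ltn_lex // (GF i u v uM vM).
case: (ltngtP (F v) (F u)) => [lt _ | // | eF] /=; first by rewrite orbF; apply: coarse.
have /eqP -> : G i u == G i v by rewrite (GF i) // eF.
by rewrite ltnn; apply: fine.
Qed.

Hypothesis c_sym : forall u v, c u v = c v u.

Lemma realization_of_quotient (M : {set V}) :
  1 < #|M| -> colored_perm_graph (qclass c M) ->
  (forall P, P \in Pmax c M -> exists f g, perm_realization P f g) ->
  exists f g, perm_realization M f g.
Proof.
move=> M_gt1 [l [/bij_inj l_inj [pis pisP]]] blockP.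
have /fin_all_exists [fg fgP] : forall q : qvert c M,
    exists fg : (V -> nat) * ('I_k -> V -> nat), perm_realization (val q) fg.1 fg.2.
  by move=> q; have [f [g fgq]] := blockP _ (valP q); exists (f, g).
pose F := qlift (fun q => val (l q)).
pose G i := qlift (fun q => val ((pis i)^-1%g (l q))).
have F_block u v : u \in M -> v \in M -> F u = F v ->
    exists2 q : qvert c M, u \in val q & v \in val q.
  move=> /(qvert_cover c M_gt1) [qu uq] /(qvert_cover c M_gt1) [qv vq].
  rewrite /F !(qliftE _ uq) !(qliftE _ vq) => /val_inj /l_inj equv.
  by exists qu; rewrite // equv.
pose f := rank (fun x => qlift (fun q => (fg q).1 x) x).
pose g i := rank (fun x => qlift (fun q => (fg q).2 i x) x).
exists (fun x => F x * #|V| + f x), (fun i x => G i x * #|V| + g i x).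
apply: realization_lex => [x | i x | i u v uM vM | i u v uM vM | u v uM vM
                         | i u v uM vM | i u v uM vM]; try exact: rank_lt_card.
- have [qu uq] := qvert_cover c M_gt1 uM; have [qv vq] := qvert_cover c M_gt1 vM.
  rewrite /F /G !(qliftE _ uq) !(qliftE _ vq).
  by rewrite !val_eqE (inj_eq perm_inj) (inj_eq l_inj).
- have [qu uq] := qvert_cover c M_gt1 uM; have [qv vq] := qvert_cover c M_gt1 vM.
  rewrite /F /G !(qliftE _ uq) !(qliftE _ vq) => lt.
  have neq : qu != qv by apply: contraTneq lt => ->; rewrite ltnn.
  rewrite -(qclass_color c_sym i neq uq vq).
  by apply/idP/idP => ?; apply/(pisP i qu qv lt).
- move=> /(F_block u v uM vM) [q uq vq] /rank_inj /=.
  rewrite (qliftE _ uq) (qliftE _ vq).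
  by have [inj _ _] := fgP q; apply: inj.
- move=> /(F_block u v uM vM) [q uq vq] /rank_inj /=.
  rewrite (qliftE _ uq) (qliftE _ vq).
  by have [_ inj _] := fgP q; apply: inj.
- move=> /(F_block u v uM vM) [q uq vq]; rewrite ltn_rank /= ltn_rank /=.
  rewrite !(qliftE _ uq) !(qliftE _ vq).
  by have [_ _ col] := fgP q; apply: col.
Qed.

Lemma strong_module_realization :
  (forall M : {set V}, strong_module c M -> 2 <= #|M| -> colored_perm_graph (qclass c M)) ->
  forall M, strong_module c M -> exists f g, perm_realization M f g.
Proof.
move=> quoP M; move: {2}#|M|.+1 (ltnSn #|M|) => n; elim: n M => // n IHn M M_le sM.
have [M_le1 | M_gt1] := leqP #|M| 1.
  by exists (fun=> 0), (fun _ _ => 0); apply: realization_le1.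
apply: (realization_of_quotient M_gt1 (quoP M sM M_gt1)) => P /PmaxP [sP pP _].
exact: IHn (leq_trans (proper_card pP) M_le) sP.
Qed.

End Realization.

Lemma colored_perm_graph_of_realization (V : finType) k (c : V -> V -> 'I_k) f g :
  perm_realization c [set: V] f g -> colored_perm_graph (color_class c).
Proof.
case=> f_inj g_inj col.
pose l x := Ordinal (rank_lt_card f x).
have l_inj : injective l.
  by move=> x y /(congr1 val) /rank_inj /f_inj; apply; rewrite inE.
have l_bij : bijective l by apply: inj_card_bij l_inj _; rewrite card_ord.
exists l; split => //; have [l' lK l'K] := l_bij.
pose tau i j := Ordinal (rank_lt_card (g i) (l' j)).
have tau_inj i : injective (tau i).
  move=> a b /(congr1 val) /rank_inj /(g_inj i).
  by rewrite !inE => /(_ isT isT) /(can_inj l'K).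
exists (fun i => (perm (tau_inj i))^-1)%g => i u v.
rewrite invgK !permE /= !lK !ltn_rank => lt.
have neq : u != v by apply: contraTneq lt => ->; rewrite ltnn.
by rewrite /color_class neq /= (col i u v) ?inE.
Qed.

Theorem proposition4p9 (V : finType) (k : nat) (c : V -> V -> 'I_k) :
  complete_colored_graph c ->
  (forall M : {set V}, strong_module c M -> 2 <= #|M| ->
     colored_perm_graph (qclass c M)) ->
  colored_perm_graph (color_class c).
Proof.
case=> c_sym _ quoP.
have [f [g fg]] : exists f g, perm_realization c [set: V] f g.
  have [V_le1 | V_gt1] := leqP #|[set: V]| 1.
    by exists (fun=> 0), (fun _ _ => 0); apply: realization_le1.
  apply: (strong_module_realization c_sym quoP (strong_module_setT c _)).
  by rewrite -cardsT ltnW.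
exact: colored_perm_graph_of_realization fg.
Qed.
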